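(* For unrestricted (arbitrary nonnegative) valuation functions in one-sided matching with $n$ agents and $n$ items, every deterministic matching algorithm that makes at most $k\ge1$ value queries per agent has distortion $\Omega\!\left(\frac1k n^{1/k}\right)$. This holds even on instances in which all agents have the same ranking of the items.
   Context: One-sided matching: there is a set $N$ of $n$ agents and a set $A$ of $n$ items. Each agent $i$ has a valuation function $v_i:A\to\mathbb{R}_{\ge0}$. A deterministic matching algorithm making $k$ queries per agent receives the profile of strict rankings $\succ_i$ consistent with the values (if $a\succ_i b$ then $v_i(a)\ge v_i(b)$). It adaptively makes value queries $(i,j)\mapsto v_i(j)$, at most $k$ per agent, and outputs a bijection $Y:N\to A$. Its distortion is the supremum over valuation profiles of $\max_Z\sum_i v_i(z_i)/\sum_i v_i(y_i)$. *)

From HB Require Import structures.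
From mathcomp Require Import all_boot all_order all_algebra all_fingroup.
From mathcomp Require Import reals exp.
Set Implicit Arguments. Unset Strict Implicit. Unset Printing Implicit Defensive.
Import Order.TTheory GRing.Theory Num.Theory.
Local Open Scope ring_scope.

Section Matching.
Variables (n : nat) (R : realType).

(* Agents and items are both 'I_n. A valuation profile: v i j = value of agent i for item j. *)
Definition valuation := 'I_n -> 'I_n -> R.

Definition nonneg_val (v : valuation) : Prop := forall i j, 0 <= v i j.

(* A strict ranking of the items: r j is the position of item j (0 = most preferred). *)
Definition ranking := {perm 'I_n}.

Definition consistent (r : ranking) (vi : 'I_n -> R) : Prop :=
  forall a b : 'I_n, (r a < r b)%N -> vi b <= vi a.

Definition profile_consistent (P : 'I_n -> ranking) (v : valuation) : Prop :=
  forall i, consistent (P i) (v i).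

Definition matching := {perm 'I_n}.

Definition welfare (v : valuation) (Y : matching) : R := \sum_(i < n) v i (Y i).

Definition opt (v : valuation) : R := \big[Num.max/0]_(Z : matching) welfare v Z.

(* Deterministic adaptive query procedure (decision tree): either output a
   matching, or query the value v i j and continue depending on the answer. *)
Inductive qtree : Type :=
| Out of matching
| Ask of 'I_n & 'I_n & (R -> qtree).

Fixpoint run (v : valuation) (t : qtree) : matching * seq ('I_n * 'I_n) :=
  match t with
  | Out Y => (Y, [::])
  | Ask i j c => let r := run v (c (v i j)) in (r.1, (i, j) :: r.2)
  end.

Definition algorithm := (('I_n -> ranking) -> qtree).

Definition k_query (k : nat) (A : algorithm) : Prop :=
  forall (P : 'I_n -> ranking) (v : valuation),
    nonneg_val v -> profile_consistent P v ->
    forall i : 'I_n, (count (fun q => q.1 == i) (run v (A P)).2 <= k)%N.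

Definition output (A : algorithm) (P : 'I_n -> ranking) (v : valuation) : matching :=
  (run v (A P)).1.

End Matching.

From HB Require Import structures.
From mathcomp Require Import all_boot all_order all_algebra all_fingroup.
From mathcomp Require Import reals exp.
From mathcomp Require Import zify ring lra.
Set Implicit Arguments. Unset Strict Implicit. Unset Printing Implicit Defensive.
Import Order.TTheory GRing.Theory Num.Theory.
Local Open Scope ring_scope.

(* Choose r with 2 r^k <= n < 2 (r+1)^k and split the items [0, r^k) into
   k+1 regions {0}, [1, r), [r, r^2), ..., [r^(k-1), r^k).  In the base
   profile every agent has the same staircase valuation of total value k+1,
   zero on the items >= r^k.  Run the algorithm on it: it outputs a matching
   Y, and at least n - r^k >= n/2 agents ("losers") get a worthless item.
   Having made at most k queries, each loser never looked at one of the k+1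
   regions (pigeonhole); the adversary raises that region by total value
   r - 1.  The new profile answers every query as before, so the algorithm
   outputs Y again and still earns k+1, while the average value of the
   cyclic-shift matchings shows opt >= k + 1 + (r-1)/2.  Since n^(1/k) < 2(r+1)
   the ratio is at least n^(1/k) / (8k). *)

Lemma run_agree n (R : realType) (v v0 : valuation n R) (t : qtree n R) :
  (forall q, q \in (run v0 t).2 -> v q.1 q.2 = v0 q.1 q.2) -> run v t = run v0 t.
Proof.
elim: t => [Y|i j c IH] //= agree.
have -> : v i j = v0 i j by apply: (agree (i, j)); rewrite inE eqxx.
by rewrite IH // => q q_in; apply: agree; rewrite inE q_in orbT.
Qed.

Lemma welfare_le_opt n (R : realType) (v : valuation n R) (Z : matching n) :
  welfare v Z <= opt v.
Proof. exact: (le_bigmax 0 (welfare v) Z). Qed.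

(* The n cyclic shifts of the items form n matchings that together cover
   every agent/item pair exactly once, so the total value is at most n * opt. *)
Lemma total_value_le_opt n (R : realType) (v : valuation n R) :
  \sum_(i < n) \sum_(j < n) v i j <= n%:R * opt v.
Proof.
case: n v => [|m] v; first by rewrite big_ord0 mul0r.
have shift i : \sum_(j < m.+1) v i j = \sum_(s < m.+1) v i (s + i)%R.
  by rewrite (reindex_inj (addIr i)).
under eq_bigr do rewrite shift.
rewrite exchange_big /= mulr_natl.
rewrite (_ : opt v *+ m.+1 = \sum_(s < m.+1) opt v); last by rewrite sumr_const card_ord.
apply: ler_sum => s _; apply: le_trans (welfare_le_opt v (perm (addrI s))).
by apply: ler_sum => i _; rewrite permE.
Qed.

Lemma count_below n T : (\sum_(j < n) (j < T : nat))%N = minn T n.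
Proof.
elim: n => [|n IH]; first by rewrite big_ord0 minn0.
by rewrite big_ord_recr /= IH; case: ltnP => lt_nT; lia.
Qed.

Lemma count_above n T : (\sum_(j < n) (T <= j : nat) = n - T)%N.
Proof.
elim: n => [|n IH]; first by rewrite big_ord0.
by rewrite big_ord_recr /= IH; case: leqP => le_nT; lia.
Qed.

Lemma sum_indicator_lt (R : pzSemiRingType) n T : (T <= n)%N ->
  \sum_(j < n) ((j < T)%N%:R : R) = T%:R.
Proof. by move=> le_Tn; rewrite -natr_sum count_below; congr _%:R; lia. Qed.

(* Every valuation of the lower-bound instance has this
   shape, which makes it automatically nonincreasing in the item index. *)
Definition staircase (R : numDomainType) (t : nat -> nat) (w : nat -> R) (m j : nat) : R :=
  \sum_(q < m) (j < t q)%N%:R * w q.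

Section Staircase.
Variables (R : numDomainType) (t : nat -> nat) (w : nat -> R) (m : nat).
Hypothesis w_ge0 : forall q, 0 <= w q.

Lemma staircase_ge0 j : 0 <= staircase t w m j.
Proof. by apply: sumr_ge0 => q _; rewrite mulr_ge0. Qed.

Lemma staircase_nonincreasing a b : (a <= b)%N -> staircase t w m b <= staircase t w m a.
Proof.
move=> le_ab; apply: ler_sum => q _; apply: ler_wpM2r => //.
by rewrite ler_nat; case: (ltnP b) => // lt_b; rewrite (leq_ltn_trans le_ab lt_b).
Qed.

Lemma staircase_total n : (forall q, (q < m)%N -> (t q <= n)%N) ->
  \sum_(j < n) staircase t w m j = \sum_(q < m) (t q)%:R * w q.
Proof.
move=> t_le_n; rewrite exchange_big; apply: eq_bigr => q _.
by rewrite -mulr_suml sum_indicator_lt ?t_le_n.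
Qed.

End Staircase.

(* With breakpoints b 0 = 0 and b (q+1) = r^q, the items
   [0, r^k) are split into the k+1 regions [b p, b (p+1)), p <= k.  The base
   valuation puts weight r^-q on each of the r^q items below r^q (q <= k), so
   it has total value k+1 and vanishes from item r^k on.  Raising region p
   moves the p-th threshold from b p to b (p+1): region p gains total value
   r - 1, every other item keeps its value. *)
Section HardInstance.
Variables (R : numFieldType) (k r : nat).
Hypothesis r_gt0 : (0 < r)%N.

Definition breakpoint (q : nat) : nat := if q is q'.+1 then r ^ q' else 0.

Definition region (p j : nat) : bool := (breakpoint p <= j < breakpoint p.+1)%N.

Definition level_weight (q : nat) : R := if q is q'.+1 then r%:R ^- q' else r%:R - 1.

Definition threshold (raise : option nat) (q : nat) : nat :=
  if raise == Some q then breakpoint q.+1 else breakpoint q.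

Definition hard_value (raise : option nat) : nat -> R :=
  staircase (threshold raise) level_weight k.+2.

Lemma breakpoint_mono : {homo breakpoint : p q / (p <= q)%N}.
Proof. by case=> [|p] [|q] //= le_pq; rewrite leq_pexp2l. Qed.

Lemma region_disjoint p p' j : region p j -> region p' j -> p = p'.
Proof.
have ordered x y : (x < y)%N -> region x j -> region y j -> False.
  move=> lt_xy /andP[_ lt_j] /andP[le_j _].
  by have := breakpoint_mono lt_xy; lia.
move=> in_p in_p'; case: (ltngtP p p') => // lt.
  by case: (ordered _ _ lt in_p in_p').
by case: (ordered _ _ lt in_p' in_p).
Qed.

Lemma level_weight_ge0 q : 0 <= level_weight q.
Proof. by case: q => [|q] /=; rewrite ?subr_ge0 ?ler1n // invr_ge0 exprn_ge0. Qed.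

Lemma region_mass p :
  (breakpoint p.+1 - breakpoint p)%:R * level_weight p = r%:R - 1 :> R.
Proof.
have r_neq0 : r%:R != 0 :> R by rewrite pnatr_eq0 -lt0n.
case: p => [|p] /=; first by rewrite subn0 expn0 mul1r.
rewrite natrB ?leq_pexp2l // !natrX mulrBl exprSr mulrAC mulfV ?expf_neq0 //.
by rewrite mul1r.
Qed.

Lemma base_mass : \sum_(q < k.+2) (breakpoint q)%:R * level_weight q = k.+1%:R.
Proof.
have r_neq0 : r%:R != 0 :> R by rewrite pnatr_eq0 -lt0n.
rewrite big_ord_recl /= mul0r add0r.
under eq_bigr do rewrite /= natrX mulfV ?expf_neq0 //.
by rewrite sumr_const card_ord.
Qed.

Lemma hard_value_ge0 raise j : 0 <= hard_value raise j.
Proof. exact/staircase_ge0/level_weight_ge0. Qed.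

Lemma hard_value_nonincreasing raise a b : (a <= b)%N -> hard_value raise b <= hard_value raise a.
Proof. exact/staircase_nonincreasing/level_weight_ge0. Qed.

Lemma hard_value_off_region p j : ~~ region p j -> hard_value (Some p) j = hard_value None j.
Proof.
move=> off_p; apply: eq_bigr => q _; rewrite /threshold /=.
case: eqP => [[<-] | //]; congr (_%:R * _).
by have := breakpoint_mono (leqnSn p); move: off_p; rewrite /region; case: ltnP => //; lia.
Qed.

Lemma threshold_le (raise : option nat) q :
  (if raise is Some p then p <= k else true)%N -> (q < k.+2)%N -> (threshold raise q <= r ^ k)%N.
Proof.
move=> raise_ok lt_q; rewrite -[(r ^ k)%N]/(breakpoint k.+1) /threshold.
case: eqP => [e | _]; apply: breakpoint_mono => //.
by move: raise_ok; rewrite e.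
Qed.

Lemma hard_value_total_base n : (r ^ k <= n)%N -> \sum_(j < n) hard_value None j = k.+1%:R.
Proof.
move=> le_n; rewrite staircase_total ?base_mass // => q lt_q.
exact: leq_trans (threshold_le (raise := None) isT lt_q) le_n.
Qed.

Lemma hard_value_total_raised n p : (p <= k)%N -> (r ^ k <= n)%N ->
  \sum_(j < n) hard_value (Some p) j = k.+1%:R + (r%:R - 1).
Proof.
move=> le_pk le_n; rewrite staircase_total; last first.
  by move=> q lt_q; exact: leq_trans (threshold_le (raise := Some p) le_pk lt_q) le_n.
have lt_p : (p < k.+2)%N by rewrite ltnS (leq_trans le_pk).
rewrite -base_mass -(region_mass p) (bigD1 (Ordinal lt_p)) // [in RHS](bigD1 (Ordinal lt_p)) //=.
rewrite /threshold eqxx addrAC; congr (_ + _).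
  by rewrite -mulrDl -natrD subnKC // (breakpoint_mono (leqnSn p)).
apply: eq_bigr => q ne_qp; case: eqP => // -[e].
by case/eqP: ne_qp; apply: val_inj.
Qed.

End HardInstance.

(* An agent asked at most k questions therefore never looks
   at one of the k+1 regions, which the adversary is then free to raise. *)
Lemma some_part_avoided m (part : nat -> pred nat) (s : seq nat) :
  (size s < m)%N -> (forall p p' x, part p x -> part p' x -> p = p') ->
  exists p : 'I_m, ~~ has (part p) s.
Proof.
move=> small disjoint; apply/existsP; rewrite -negb_forall; apply/negP => /forallP hit.
pose witness (p : 'I_m) := nth 0%N s (find (part p) s).
have witness_part (p : 'I_m) : part p (witness p) by apply: nth_find.
have witness_inj : injective witness.
  move=> p p' e; apply/val_inj/(disjoint _ _ (witness p)); first exact: witness_part.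
  by rewrite e; exact: witness_part.
have covered : {subset map witness (enum 'I_m) <= s}.
  by move=> x /mapP[p _ ->]; rewrite mem_nth // -has_find.
have witnesses_uniq : uniq (map witness (enum 'I_m)).
  by rewrite (map_inj_uniq witness_inj) enum_uniq.
have := uniq_leq_size witnesses_uniq covered.
by rewrite size_map size_enum_ord leqNgt small.
Qed.

Section Adversary.
Variables (R : realType) (n k r : nat).
Hypotheses (r_gt0 : (0 < r)%N) (le_rk_n : (r ^ k <= n)%N).

Definition hard_profile (raise : 'I_n -> option nat) : valuation n R :=
  fun i j => hard_value R k r (raise i) j.

Definition base_profile : valuation n R := hard_profile (fun=> None).

Lemma hard_profile_admissible raise :
  nonneg_val (hard_profile raise) /\ profile_consistent (fun=> 1%g) (hard_profile raise).
Proof.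
split=> [i j | i a b]; first exact: hard_value_ge0.
by rewrite !perm1 => /ltnW; apply: hard_value_nonincreasing.
Qed.

Lemma unexplored_regions (Q : seq ('I_n * 'I_n)) :
  (forall i, count (fun q => q.1 == i) Q <= k)%N ->
  exists g : 'I_n -> 'I_k.+1,
    forall i, {in Q, forall q : 'I_n * 'I_n, q.1 = i -> ~~ region r (g i) q.2}.
Proof.
move=> few.
suff avoid i : exists p : 'I_k.+1, {in Q, forall q : 'I_n * 'I_n, q.1 = i -> ~~ region r p q.2}.
  exact: fin_all_exists avoid.
pose asked := [seq val q.2 | q <- Q & q.1 == i].
have small : (size asked < k.+1)%N by rewrite size_map size_filter ltnS.
have [p avoided] := some_part_avoided small (region_disjoint r_gt0).
exists p => q q_in q_i; apply: contra avoided => in_p; apply/hasP.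
by exists (val q.2) => //; apply/map_f; rewrite mem_filter q_i eqxx.
Qed.

Section Raise.
Variables (Y : matching n) (g : 'I_n -> 'I_k.+1).

(* Agents matched to a worthless item (index >= r^k) get their region raised. *)
Definition raise_losers (i : 'I_n) : option nat :=
  if (r ^ k <= Y i)%N then Some (val (g i)) else None.

Let v := hard_profile raise_losers.

Lemma raised_off_region i (j : 'I_n) : ((r ^ k <= Y i)%N -> ~~ region r (g i) j) ->
  v i j = base_profile i j.
Proof.
rewrite /v /hard_profile /raise_losers; case: ifP => // _ off.
exact/hard_value_off_region/off.
Qed.

(* The assigned items are untouched: raised regions lie below r^k. *)
Lemma welfare_raise_losers : welfare v Y = k.+1%:R.
Proof.
rewrite -(hard_value_total_base R r_gt0 le_rk_n).
rewrite /welfare (eq_bigr (fun i => base_profile i (Y i))); last first.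
  move=> i _; apply: raised_off_region => le_Y; rewrite /region negb_and -leqNgt orbC.
  by rewrite (leq_trans _ le_Y) // (breakpoint_mono r_gt0 (ltn_ord (g i))).
by rewrite [RHS](reindex_inj (@perm_inj _ Y)).
Qed.

Lemma queries_unchanged (Q : seq ('I_n * 'I_n)) :
  (forall i, {in Q, forall q : 'I_n * 'I_n, q.1 = i -> ~~ region r (g i) q.2}) ->
  {in Q, forall q : 'I_n * 'I_n, v q.1 q.2 = base_profile q.1 q.2}.
Proof. by move=> avoid q q_in; apply: raised_off_region => _; apply: avoid q_in _. Qed.

Lemma total_raise_losers :
  \sum_(i < n) \sum_(j < n) v i j = n%:R * k.+1%:R + (r%:R - 1) * (n - r ^ k)%:R.
Proof.
have row i : \sum_(j < n) v i j = k.+1%:R + (r ^ k <= Y i)%N%:R * (r%:R - 1).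
  rewrite /v /hard_profile /raise_losers; case: ifP => _; rewrite ?mul1r ?mul0r ?addr0.
    by rewrite hard_value_total_raised // -ltnS ltn_ord.
  by rewrite (hard_value_total_base R r_gt0 le_rk_n).
have losers : (\sum_(i < n) (r ^ k <= Y i) = n - r ^ k)%N.
  by rewrite -count_above [RHS](reindex_inj (@perm_inj _ Y)).
under eq_bigr do rewrite row.
by rewrite big_split /= sumr_const card_ord mulr_natl -mulr_suml mulrC -natr_sum losers.
Qed.

End Raise.
End Adversary.

Lemma kth_root_bracket m k : (0 < k)%N -> exists r, (r ^ k <= m < r.+1 ^ k)%N.
Proof.
move=> k_gt0.
have ex0 : exists x, (x ^ k <= m)%N by exists 0%N; rewrite exp0n.
have bounded x : (x ^ k <= m)%N -> (x <= m)%N.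
  case: x => // x; apply: leq_trans; rewrite -{1}(expn1 x.+1) leq_pexp2l //.
have [r le_rm max_r] := ex_maxnP ex0 bounded.
by exists r; rewrite le_rm ltnNge; apply/negP => /max_r; rewrite ltnn.
Qed.

Lemma powR_inv_lt (R : realType) (x y : R) k : (0 < k)%N -> 0 <= x -> 0 <= y ->
  x < y ^+ k -> x `^ (k%:R)^-1 < y.
Proof.
move=> k_gt0 x_ge0 y_ge0 lt_xy.
have k_neq0 : k%:R != 0 :> R by rewrite pnatr_eq0 -lt0n.
have root_k : (x `^ (k%:R)^-1) ^+ k = x.
  by rewrite -powR_mulrn ?powR_ge0 // -powRrM mulVf // powRr1.
by rewrite -(ltr_pXn2r k_gt0) ?nnegrE ?powR_ge0 // root_k.
Qed.

Lemma choose_base (R : realType) n k : (0 < k)%N -> (2 <= n)%N ->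
  exists r, [/\ (0 < r)%N, (2 * r ^ k <= n)%N & n%:R `^ (k%:R)^-1 < 2 * r.+1%:R :> R].
Proof.
move=> k_gt0 n_ge2; have [r /andP[le_r lt_r]] := kth_root_bracket n./2 k_gt0.
have r_gt0 : (0 < r)%N.
  by rewrite lt0n; apply: contraTneq lt_r => ->; rewrite exp1n -leqNgt; lia.
have half_n := odd_double_half n; rewrite -mul2n in half_n.
exists r; split => //; first by lia.
have lt_n : (n < (2 * r.+1) ^ k)%N.
  have : (2 <= 2 ^ k)%N by rewrite -{1}(expn1 2) leq_pexp2l.
  by rewrite expnMn; nia.
by rewrite -natrM; apply: powR_inv_lt => //; rewrite -natrX ltr_nat.
Qed.

Lemma opt_from_average (R : realFieldType) (N K r X O : R) :
  0 < N -> 1 <= r -> 2 * X <= N -> N * (K + 1) + (r - 1) * (N - X) <= N * O ->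
  K + 1 + (r - 1) / 2 <= O.
Proof.
move=> N_gt0 r_ge1 le_X avg; rewrite -(ler_pM2l N_gt0).
have : (r - 1) * (N / 2) <= (r - 1) * (N - X) by apply: ler_wpM2l; lra.
lra.
Qed.

Lemma distortion_bound (R : realFieldType) (K r a O : R) :
  1 <= K -> 1 <= r -> 0 <= a -> a < 2 * (r + 1) -> K + 1 + (r - 1) / 2 <= O ->
  0 < O /\ 1 / 8 * a / K * (K + 1) <= O.
Proof.
move=> K_ge1 r_ge1 a_ge0 lt_a opt_ge; split; first by lra.
have K_gt0 : 0 < K by lra.
have le_aK : a / K <= a by rewrite ler_pdivrMr // ler_peMr.
have -> : 1 / 8 * a / K * (K + 1) = (a + a / K) / 8 by field; lra.
lra.
Qed.

Theorem theorem5 (R : realType) :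
  exists c : R, 0 < c /\
  exists N : nat, forall k n : nat, (1 <= k)%N -> (N <= n)%N ->
  forall A : algorithm n R, k_query k A ->
  exists sigma : ranking n,
  exists v : valuation n R,
    [/\ nonneg_val v,
        profile_consistent (fun _ => sigma) v,
        0 < opt v &
        c * (n%:R `^ (k%:R)^-1) / k%:R * welfare v (output A (fun _ => sigma) v)
          <= opt v].
Proof.
exists (1 / 8); split; first by lra.
exists 2%N => k n k_ge1 n_ge2 A A_k.
have [r [r_gt0 le_2rk_n root_lt]] := choose_base R k_ge1 n_ge2.
have le_rk_n : (r ^ k <= n)%N by lia.
have r_ge1 : 1 <= r%:R :> R by rewrite ler1n.
pose v0 := base_profile R (n := n) k r.
have [v0_nonneg v0_cons] := hard_profile_admissible R (n := n) k r_gt0 (fun=> None).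
pose Y := output A (fun=> 1%g) v0.
have [g avoid] := unexplored_regions r_gt0 (A_k _ v0 v0_nonneg v0_cons).
pose v := hard_profile R k r (raise_losers r Y g).
have [v_nonneg v_cons] := hard_profile_admissible R k r_gt0 (raise_losers r Y g).
have same_output : output A (fun=> 1%g) v = Y.
  by rewrite /Y /output (run_agree (v0 := v0) (queries_unchanged R r_gt0 Y avoid)).
have opt_ge : k%:R + 1 + (r%:R - 1) / 2 <= opt v.
  apply: (opt_from_average (N := n%:R) (X := (r ^ k)%:R)).
  - by rewrite ltr0n ltnW.
  - by [].
  - by rewrite -(ler_nat R) natrM in le_2rk_n.
  rewrite natr1 -natrB // -(total_raise_losers R r_gt0 le_rk_n Y g).
  exact: total_value_le_opt.
have [|||opt_gt0 bound] := distortion_bound (K := k%:R) (a := n%:R `^ (k%:R)^-1) _ r_ge1 _ _ opt_ge.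
- by rewrite ler1n.
- by rewrite powR_ge0.
- by rewrite -[r.+1%:R]natr1 in root_lt.
exists 1%g, v; rewrite same_output (welfare_raise_losers R r_gt0 le_rk_n Y g).
by split=> //; rewrite -[k.+1%:R]natr1.
Qed.
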